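(* Let $P$ be a connected undirected query graph with at least two vertices, and let $c_P$ be its connected domination number. Then every execution plan of $P$ has at least $c_P$ decomposition units, and there exists an execution plan of $P$ with exactly $c_P$ decomposition units.
   Context: A connected dominating set of $P$ is a set $D\subseteq V_P$ such that every vertex of $P$ is in $D$ or adjacent to a vertex of $D$, and the subgraph induced by $D$ is connected; $c_P$ is the minimum cardinality of a connected dominating set. A decomposition of $P$ is a sequence $(dp_0,\dots,dp_l)$ of subgraphs of $P$ (the decomposition units) such that: (1) the vertex set of each $dp_i$ consists of a pivot vertex $dp_i.piv$ and a non-empty set $dp_i.LF$ of leaf vertices, with $(dp_i.piv,u')\in E_P$ for every $u'\in dp_i.LF$; (2) the edge set of $dp_i$ consists of the edges $(dp_i.piv,u')$ for $u'\in dp_i.LF$ together with all edges of $P$ between two vertices of $dp_i.LF$; (3) $\bigcup_i V_{dp_i}=V_P$, and for $i<j$, $V_{dp_i}\cap dp_j.LF=\emptyset$. Such a decomposition is an execution plan if $dp_i.piv\in \bigcup_{j<i}V_{dp_j}$ for all $i\in[1,l]$. The number of decomposition units of the plan is $l+1$. *)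

From mathcomp Require Import all_boot.
Set Implicit Arguments. Unset Strict Implicit. Unset Printing Implicit Defensive.

(* A decomposition unit is represented by the pair
   (piv, LF) : T * {set T}; its vertex set is piv |: LF, and its edge set is
   determined by condition (2) (the pivot edges plus all P-edges inside LF),
   so the pair determines the unit. *)

Section Defs.
Variable T : finType.
Variable e : rel T.

Definition simple_graph := symmetric e /\ irreflexive e.
Definition graph_connected := forall x y : T, connect e x y.

Definition is_cds (D : {set T}) : bool :=
  [forall v, (v \in D) || [exists d in D, e v d]] &&
  [forall x in D, forall y in D,
      connect [rel a b | [&& e a b, a \in D & b \in D]] x y].

Definition cds_number : nat :=
  #|[arg min_(D < [set: T] | is_cds D) #|D|]|.

Definition unit_piv (u : T * {set T}) : T := u.1.
Definition unit_LF (u : T * {set T}) : {set T} := u.2.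
Definition unit_V (u : T * {set T}) : {set T} := u.1 |: u.2.

Definition unit_ok (u : T * {set T}) : bool :=
  (unit_LF u != set0) && [forall x in unit_LF u, e (unit_piv u) x].

Definition is_decomposition (p : seq (T * {set T})) : Prop :=
  [/\ p != [::],
      all unit_ok p,
      \bigcup_(u <- p) unit_V u = [set: T] &
      forall (d : T * {set T}) (i j : nat), i < j -> j < size p ->
        unit_V (nth d p i) :&: unit_LF (nth d p j) = set0].

Definition is_execution_plan (p : seq (T * {set T})) : Prop :=
  is_decomposition p /\
  forall (d : T * {set T}) (i : nat), 0 < i -> i < size p ->
    unit_piv (nth d p i) \in \bigcup_(j < i) unit_V (nth d p j).

End Defs.

From mathcomp Require Import all_boot.
Set Implicit Arguments. Unset Strict Implicit. Unset Printing Implicit Defensive.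

(* The pivots of an execution plan form a connected dominating set: every
   vertex is a pivot or a leaf adjacent to its pivot, and every later pivot
   lies in an earlier unit, so it is an earlier pivot or adjacent to one.  Conversely, from a minimum connected
   dominating set D one builds a plan greedily: repeatedly take an already
   covered vertex of D, not yet a pivot, that has uncovered neighbours, and
   add the unit with that pivot and those neighbours as leaves.  When this
   stops, the covered set contains a vertex of D and is closed under taking
   neighbours of vertices of D; as D is connected and dominating, everything
   is covered, and the plan uses at most |D| = c_P distinct pivots. *)

Section ExecutionPlans.
Variable T : finType.
Variable e : rel T.
Hypothesis e_sym : symmetric e.

Definition induced (D : {set T}) := [rel a b | [&& e a b, a \in D & b \in D]].

Definition nbhd (x : T) : {set T} := [set y | e x y].

Lemma induced_connect_sym D : connect_sym (induced D).
Proof.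
by apply: sym_connect_sym => a b /=; rewrite e_sym [(a \in D) && _]andbC.
Qed.

Lemma cds_from_root (D : {set T}) r :
    (forall v, v \notin D -> exists2 d, d \in D & e v d) ->
    (forall x, x \in D -> connect (induced D) r x) ->
  is_cds e D.
Proof.
move=> dom conn; apply/andP; split.
  apply/forallP => v; case: (boolP (v \in D)) => //= /dom [d dD evd].
  by apply/existsP; exists d; rewrite dD.
apply/forall_inP => x xD; apply/forall_inP => y yD.
by apply: connect_trans (conn y yD); rewrite induced_connect_sym; apply: conn.
Qed.

Lemma cds_closed_cover D (A : {set T}) d0 :
    is_cds e D -> d0 \in D -> d0 \in A ->
    {in D, forall a b, a \in A -> e a b -> b \in A} ->
  A = setT.
Proof.
case/andP=> /forallP dom /forall_inP conn d0D d0A closedA.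
have DA x : x \in D -> x \in A.
  move=> xD; have /connectP [s] := forall_inP (conn d0 d0D) x xD.
  elim: s d0 d0D d0A => [|b s IHs] a aD aA /=; first by move=> _ ->.
  by case/andP=> /and3P [eab _ bD]; apply: IHs; last exact: closedA eab.
apply/setP => v; rewrite inE.
have /orP [vD|/existsP [d /andP [dD evd]]] := dom v; first exact: DA.
by apply: (closedA d dD v (DA d dD)); rewrite e_sym.
Qed.

Lemma cds_neq0 D : 0 < #|T| -> is_cds e D -> D != set0.
Proof.
case/card_gt0P=> v _ /andP [/forallP /(_ v) /orP dom _]; apply/set0Pn.
by case: dom => [vD|/existsP [d /andP [dD _]]]; [exists v | exists d].
Qed.

Hypothesis e_conn : graph_connected e.

Lemma nbhd_neq0 x : 1 < #|T| -> nbhd x != set0.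
Proof.
case/card_gt1P=> [y [z [_ _ yz]]].
have [w wx] : exists w, w != x.
  by case: (eqVneq y x) => [<-|]; [exists z; rewrite eq_sym | exists y].
have /connectP [[|b s] /= path_xw last_w] := e_conn x w.
  by rewrite last_w eqxx in wx.
by apply/set0Pn; exists b; case/andP: path_xw; rewrite inE.
Qed.

Lemma setT_cds : is_cds e [set: T].
Proof.
apply/andP; split; first by apply/forallP => v; rewrite in_setT.
apply/forall_inP => x _; apply/forall_inP => y _.
by rewrite (@eq_connect _ _ e) // => a b /=; rewrite !in_setT !andbT.
Qed.

Lemma cds_number_min D : is_cds e D -> cds_number e <= #|D|.
Proof.
rewrite /cds_number; case: (arg_minnP (fun D : {set T} => #|D|) setT_cds).
by move=> A _ A_min /A_min.
Qed.

Lemma cds_number_attained : exists2 D, is_cds e D & #|D| = cds_number e.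
Proof.
rewrite /cds_number; case: (arg_minnP (fun D : {set T} => #|D|) setT_cds).
by move=> A A_cds _; exists A.
Qed.

Definition plan_cover (q : seq (T * {set T})) : {set T} :=
  \bigcup_(u <- q) unit_V u.

Definition pivots (q : seq (T * {set T})) : {set T} :=
  [set x in map (@unit_piv T) q].

Lemma plan_cover_nth d q :
  plan_cover q = \bigcup_(j < size q) unit_V (nth d q j).
Proof. by rewrite /plan_cover (big_nth d) big_mkord. Qed.

Lemma plan_cover_rcons q u : plan_cover (rcons q u) = plan_cover q :|: unit_V u.
Proof. by rewrite /plan_cover -cats1 big_cat big_seq1. Qed.

Lemma unit_V_sub_cover q u : u \in q -> unit_V u \subset plan_cover q.
Proof. by move=> uq; rewrite /plan_cover bigcup_seq; apply: bigcup_sup. Qed.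

Lemma plan_coverP q x :
  reflect (exists2 u, u \in q & x \in unit_V u) (x \in plan_cover q).
Proof. by rewrite /plan_cover bigcup_seq; apply: (iffP bigcupP). Qed.

Lemma unit_ok_leaf u x : unit_ok e u -> x \in unit_LF u -> e (unit_piv u) x.
Proof. by case/andP=> _ /forall_inP; apply. Qed.

Lemma plan_pivots_cds p : is_execution_plan e p -> is_cds e (pivots p).
Proof.
case=> -[p_nil p_ok p_cover _] p_reached.
have u0 : T * {set T} by case: p p_nil {p_ok p_cover p_reached}.
have pivP i : i < size p -> unit_piv (nth u0 p i) \in pivots p.
  by move=> lt_ip; rewrite inE map_f ?mem_nth.
apply: (@cds_from_root _ (unit_piv (nth u0 p 0))).
  move=> v v_piv; have /plan_coverP [u up] : v \in plan_cover p.
    by rewrite /plan_cover p_cover.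
  rewrite /unit_V !inE => /orP [/eqP v_eq|v_leaf].
    by rewrite inE v_eq map_f in v_piv.
  exists (unit_piv u); first by rewrite inE map_f.
  by rewrite e_sym; apply: unit_ok_leaf _ v_leaf; apply: (allP p_ok).
have reach i : i < size p ->
    connect (induced (pivots p)) (unit_piv (nth u0 p 0)) (unit_piv (nth u0 p i)).
  elim/ltn_ind: i => -[_ _|i IHi lt_ip]; first exact: connect0.
  have /bigcupP [j _] := p_reached u0 i.+1 isT lt_ip.
  have lt_jp : j < size p := ltn_trans (ltn_ord j) lt_ip.
  rewrite /unit_V !inE => /orP [/eqP ->|leaf]; first exact: IHi.
  apply: connect_trans (IHi j (ltn_ord j) lt_jp) (connect1 _).
  rewrite /induced /= !pivP // !andbT; apply: unit_ok_leaf _ leaf.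
  exact/(allP p_ok)/mem_nth.
move=> x; rewrite inE => /mapP [u up ->].
by rewrite -(nth_index u0 up); apply: reach; rewrite index_mem.
Qed.

Lemma cds_number_le_plan p : is_execution_plan e p -> cds_number e <= size p.
Proof.
move=> /plan_pivots_cds /cds_number_min /leq_trans; apply.
by rewrite cardsE -(size_map (@unit_piv T)) card_size.
Qed.

Definition leaves_fresh (q : seq (T * {set T})) :=
  forall d i j, i < j -> j < size q ->
    unit_V (nth d q i) :&: unit_LF (nth d q j) = set0.

Definition pivots_reached (q : seq (T * {set T})) :=
  forall d i, 0 < i -> i < size q ->
    unit_piv (nth d q i) \in \bigcup_(j < i) unit_V (nth d q j).

Lemma leaves_fresh_rcons q u :
    leaves_fresh q -> plan_cover q :&: unit_LF u = set0 ->
  leaves_fresh (rcons q u).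
Proof.
move=> fresh_q fresh_u d i j lt_ij.
rewrite size_rcons ltnS leq_eqVlt => /orP [/eqP def_j|lt_jq].
  rewrite !nth_rcons -def_j lt_ij ltnn eqxx; apply/eqP.
  rewrite -subset0 -fresh_u setSI // unit_V_sub_cover // mem_nth //.
  by rewrite -def_j.
by rewrite !nth_rcons lt_jq (ltn_trans lt_ij lt_jq); apply: fresh_q.
Qed.

Lemma pivots_reached_rcons q u :
    pivots_reached q -> unit_piv u \in plan_cover q ->
  pivots_reached (rcons q u).
Proof.
move=> reached_q covered_u d i i_gt0.
rewrite size_rcons ltnS leq_eqVlt => /orP [/eqP ->|lt_iq].
  rewrite nth_rcons ltnn eqxx.
  under eq_bigr => k _ do rewrite nth_rcons (ltn_ord k).
  by rewrite -plan_cover_nth.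
under eq_bigr => k _ do rewrite nth_rcons (ltn_trans (ltn_ord k) lt_iq).
by rewrite nth_rcons lt_iq; apply: reached_q.
Qed.

Record greedy_plan (D : {set T}) (q : seq (T * {set T})) : Prop := GreedyPlan {
  greedy_nil : q != [::];
  greedy_ok : all (unit_ok e) q;
  greedy_fresh : leaves_fresh q;
  greedy_reached : pivots_reached q;
  greedy_uniq : uniq (map (@unit_piv T) q);
  greedy_sub : pivots q \subset D;
  greedy_saturated :
    {in q, forall u x, e (unit_piv u) x -> x \in plan_cover q}
}.

Lemma greedy_size D q : greedy_plan D q -> size q <= #|D|.
Proof.
case=> _ _ _ _ q_uniq q_sub _.
apply: leq_trans (subset_leq_card q_sub).
by rewrite /pivots cardsE (card_uniqP q_uniq) size_map.
Qed.

Lemma greedy_plan_single (D : {set T}) d :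
  d \in D -> nbhd d != set0 -> greedy_plan D [:: (d, nbhd d)].
Proof.
move=> dD nbhd_d; split=> //.
- by rewrite /= andbT /unit_ok nbhd_d; apply/forall_inP => x; rewrite inE.
- by move=> ? i [].
- by move=> ? [|[]].
- by apply/subsetP => x; rewrite !inE => /eqP ->.
- move=> u; rewrite inE => /eqP -> x edx.
  by rewrite /plan_cover big_seq1 /unit_V !inE edx orbT.
Qed.

Lemma greedy_plan_rcons D q a b :
    greedy_plan D q -> a \in D -> a \in plan_cover q -> a \notin pivots q ->
    e a b -> b \notin plan_cover q ->
  greedy_plan D (rcons q (a, nbhd a :\: plan_cover q)).
Proof.
case=> _ q_ok q_fresh q_reached q_uniq q_sub q_sat aD a_cov a_piv eab b_cov.
have leaves_new : b \in nbhd a :\: plan_cover q by rewrite !inE b_cov eab.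
split.
- by case: (q).
- rewrite all_rcons q_ok andbT /unit_ok /=; apply/andP; split.
    by apply/set0Pn; exists b.
  by apply/forall_inP => x; rewrite !inE => /andP [].
- apply: leaves_fresh_rcons => //; apply/setP => x.
  by rewrite !inE; case: (x \in plan_cover q); rewrite ?andbF.
- exact: pivots_reached_rcons.
- by rewrite map_rcons rcons_uniq q_uniq andbT; rewrite inE in a_piv.
- apply/subsetP => x; rewrite inE map_rcons mem_rcons inE => /orP [/eqP ->//|].
  by move=> x_piv; apply: (subsetP q_sub); rewrite inE.
- move=> u; rewrite mem_rcons inE plan_cover_rcons => /orP [/eqP ->|uq] x ux.
    by rewrite /unit_V !inE ux andbT orbCA orbN !orbT.
  by rewrite inE (q_sat u uq x ux).
Qed.

Lemma greedy_plan_saturate D q :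
    greedy_plan D q ->
  exists2 q', greedy_plan D q' &
    {in D, forall a b, a \in plan_cover q' -> e a b -> b \in plan_cover q'}.
Proof.
have [n] := ubnP (#|D| - size q); elim: n q => // n IHn q lt_qn gq.
have [|stuck] := boolP [exists a, exists b,
  [&& a \in D, a \in plan_cover q, e a b & b \notin plan_cover q]].
  case/existsP=> a /existsP [b /and4P [aD a_cov eab b_cov]].
  have a_piv : a \notin pivots q.
    apply: contra b_cov; rewrite inE => /mapP [w wq def_a].
    by apply: (greedy_saturated gq wq); rewrite -def_a.
  have gq' := greedy_plan_rcons gq aD a_cov a_piv eab b_cov.
  have := greedy_size gq'; rewrite size_rcons -subn_gt0 => pos.
  by apply: IHn gq'; rewrite size_rcons subnS -ltnS prednK.
exists q => // a aD b a_cov eab; apply: contraNT stuck => b_cov.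
by apply/existsP; exists a; apply/existsP; exists b; rewrite aD a_cov eab.
Qed.

Lemma plan_of_cds D :
  1 < #|T| -> is_cds e D -> exists2 p, is_execution_plan e p & size p <= #|D|.
Proof.
move=> T_gt1 D_cds.
have /set0Pn [d dD] := cds_neq0 (ltnW T_gt1) D_cds.
have [q gq q_sat] := greedy_plan_saturate (greedy_plan_single dD (nbhd_neq0 d T_gt1)).
have [u uq] : exists u, u \in q.
  by case: q gq {q_sat} => [[]//|u q _]; exists u; rewrite mem_head.
have uD : unit_piv u \in D.
  by apply: (subsetP (greedy_sub gq)); rewrite inE map_f.
have u_cov : unit_piv u \in plan_cover q.
  by apply: (subsetP (unit_V_sub_cover uq)); rewrite setU11.
have q_cover := cds_closed_cover D_cds uD u_cov q_sat.
exists q; last exact: greedy_size gq.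
by case: gq => *; split; first split.
Qed.

End ExecutionPlans.

Theorem theorem1 (T : finType) (e : rel T) :
  simple_graph e -> graph_connected e -> 1 < #|T| ->
  (forall p, is_execution_plan e p -> cds_number e <= size p) /\
  (exists p, is_execution_plan e p /\ size p = cds_number e).
Proof.
move=> [e_sym _] e_conn T_gt1.
split=> [p|]; first exact: (cds_number_le_plan e_sym e_conn).
have [D D_cds D_min] := cds_number_attained e_conn.
have [p p_plan p_size] := plan_of_cds e_sym e_conn T_gt1 D_cds.
exists p; split=> //; apply/eqP; rewrite eqn_leq -{1}D_min p_size /=.
exact: (cds_number_le_plan e_sym e_conn p_plan).
Qed.
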